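(* Let $\alpha,\beta,\gamma,\kappa>0$ with $\mu:=\gamma-\alpha\beta>0$, and let $\lambda>0$. For $\eta\in\mathbb R$ define the polynomial $$p_\eta(z)=z^4+(\alpha+\kappa\lambda)z^3+(\beta\lambda+\alpha\kappa\lambda+\eta^2\lambda^2)z^2+(\gamma\lambda+\beta\kappa\lambda^2+\alpha\eta^2\lambda^2)z+\gamma\kappa\lambda^2.$$ Then for every $\eta\in\mathbb R$ with $|\eta|$ small enough, $p_\eta$ possesses a complex root $z_\eta$ with $\operatorname{Re} z_\eta>0$.
   Context: $p_\eta$ is the characteristic polynomial of the ODE system $\phi'''+\alpha\phi''+\beta\lambda\phi'+\gamma\lambda\phi-\eta\lambda\psi=0$, $\psi'+\kappa\lambda\psi+\eta\lambda\phi''+\alpha\eta\lambda\phi'=0$, obtained from single-mode solutions $u=\phi(t)w$, $\theta=\psi(t)w$ of the coupled MGT–Fourier system when $Aw=\lambda w$. *)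

From mathcomp Require Import all_boot all_order all_algebra.
From mathcomp Require Import reals.
From mathcomp.real_closed Require Import complex.
Set Implicit Arguments. Unset Strict Implicit. Unset Printing Implicit Defensive.
Import Order.TTheory GRing.Theory Num.Theory.
Local Open Scope ring_scope.
Local Open Scope complex_scope.

Definition p_eta (R : realType) (alpha beta gamma kappa lambda eta : R)
  : {poly R[i]} :=
  'X^4
  + ((alpha + kappa * lambda)%:C)%:P * 'X^3
  + ((beta * lambda + alpha * kappa * lambda + eta ^+ 2 * lambda ^+ 2)%:C)%:P
      * 'X^2
  + ((gamma * lambda + beta * kappa * lambda ^+ 2
      + alpha * eta ^+ 2 * lambda ^+ 2)%:C)%:P * 'X
  + ((gamma * kappa * lambda ^+ 2)%:C)%:P.

(* A real monic quartic X^4 + a1 X^3 + a2 X^2 + a3 X + a4 is a product of two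
   real monic quadratics X^2 + u X + v and X^2 + r X + s.  If u, v, r, s are all
   nonnegative, its Hurwitz determinant a1 a2 a3 - a3^2 - a1^2 a4 equals
   u r ((v - s)^2 + (u + r)(u s + v r)) >= 0.  Hence a negative Hurwitz
   determinant forces a quadratic factor with a negative coefficient, and such a
   quadratic has a root with positive real part.  For p_eta the determinant is a
   polynomial in eta whose value at eta = 0 is
   - lambda mu (c^3 + alpha c^2 + beta lambda c + gamma lambda), c = kappa lambda,
   which is negative because mu > 0; by continuity it stays negative for small
   |eta|. *)

From mathcomp Require Import all_boot all_order all_algebra.
From mathcomp Require Import reals.
From mathcomp.real_closed Require Import complex polyrcf.
From mathcomp Require Import ring lra.
Set Implicit Arguments. Unset Strict Implicit. Unset Printing Implicit Defensive.
Import Order.TTheory GRing.Theory Num.Theory.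
Local Open Scope ring_scope.
Local Open Scope complex_scope.

Definition quadratic (R : nzSemiRingType) (u v : R) : {poly R} :=
  'X^2 + u%:P * 'X + v%:P.

Definition quartic (R : nzSemiRingType) (a1 a2 a3 a4 : R) : {poly R} :=
  'X^4 + a1%:P * 'X^3 + a2%:P * 'X^2 + a3%:P * 'X + a4%:P.

Definition hurwitz3 (R : comPzRingType) (a1 a2 a3 a4 : R) : R :=
  a1 * a2 * a3 - a3 ^+ 2 - a1 ^+ 2 * a4.

Section MonicPolynomials.
Variable R : nzRingType.

Lemma quadratic_Poly (u v : R) : quadratic u v = Poly [:: v; u; 1].
Proof.
apply/polyP => k; rewrite coef_Poly /quadratic !coefE.
by case: k => [|[|[|k]]] /=; rewrite ?mulr0 ?mulr1 ?addr0 ?add0r ?nth_nil.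
Qed.

Lemma quartic_Poly (a1 a2 a3 a4 : R) :
  quartic a1 a2 a3 a4 = Poly [:: a4; a3; a2; a1; 1].
Proof.
apply/polyP => k; rewrite coef_Poly /quartic !coefE.
by case: k => [|[|[|[|[|k]]]]] /=; rewrite ?mulr0 ?mulr1 ?addr0 ?add0r ?nth_nil.
Qed.

Lemma size_quadratic (u v : R) : size (quadratic u v) = 3.
Proof. by rewrite quadratic_Poly (PolyK (c := 0)) //= oner_neq0. Qed.

Lemma monic_quadratic (u v : R) : quadratic u v \is monic.
Proof. by rewrite monicE lead_coefE size_quadratic quadratic_Poly coef_Poly. Qed.

Lemma size_quartic (a1 a2 a3 a4 : R) : size (quartic a1 a2 a3 a4) = 5.
Proof. by rewrite quartic_Poly (PolyK (c := 0)) //= oner_neq0. Qed.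

Lemma monic_quartic (a1 a2 a3 a4 : R) : quartic a1 a2 a3 a4 \is monic.
Proof. by rewrite monicE lead_coefE size_quartic quartic_Poly coef_Poly. Qed.

Lemma quartic_inj (a1 a2 a3 a4 b1 b2 b3 b4 : R) :
  quartic a1 a2 a3 a4 = quartic b1 b2 b3 b4 ->
  [/\ a1 = b1, a2 = b2, a3 = b3 & a4 = b4].
Proof.
rewrite !quartic_Poly => /(congr1 polyseq).
by rewrite !(PolyK (c := 0)) /= ?oner_neq0 // => -[-> -> -> ->].
Qed.

Lemma monic_size3_quadratic (p : {poly R}) :
  p \is monic -> size p = 3 -> p = quadratic p`_1 p`_0.
Proof.
move=> /monicP p_monic p_size; rewrite quadratic_Poly.
apply/polyP => -[|[|[|k]]]; rewrite coef_Poly //=.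
- by rewrite -p_monic lead_coefE p_size.
- by rewrite nth_nil nth_default // p_size.
Qed.

Lemma map_quadratic (S : nzRingType) (f : {rmorphism R -> S}) (u v : R) :
  map_poly f (quadratic u v) = quadratic (f u) (f v).
Proof. by rewrite /quadratic !rmorphD !rmorphXn !rmorphM /= map_polyX !map_polyC. Qed.

Lemma map_quartic (S : nzRingType) (f : {rmorphism R -> S}) (a1 a2 a3 a4 : R) :
  map_poly f (quartic a1 a2 a3 a4) = quartic (f a1) (f a2) (f a3) (f a4).
Proof. by rewrite /quartic !rmorphD !rmorphXn !rmorphM /= map_polyX !map_polyC. Qed.

End MonicPolynomials.

Lemma quadraticM (R : comNzRingType) (u v r s : R) :
  quadratic u v * quadratic r s =
  quartic (u + r) (v + s + u * r) (u * s + v * r) (v * s).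
Proof. by rewrite /quadratic /quartic !polyCD !polyCM; ring. Qed.

Lemma mul_XsubC_quadratic (R : comNzRingType) (a b : R) :
  ('X - a%:P) * ('X - b%:P) = quadratic (- (a + b)) (a * b).
Proof. by rewrite /quadratic polyCN polyCD polyCM; ring. Qed.

Lemma horner_quadratic (R : comNzRingType) (u v x : R) :
  (quadratic u v).[x] = x ^+ 2 + u * x + v.
Proof. by rewrite !hornerE. Qed.

Lemma hurwitz3_quadraticM_ge0 (R : realDomainType) (u v r s : R) :
  0 <= u -> 0 <= v -> 0 <= r -> 0 <= s ->
  0 <= hurwitz3 (u + r) (v + s + u * r) (u * s + v * r) (v * s).
Proof.
move=> u_ge0 v_ge0 r_ge0 s_ge0.
have -> : hurwitz3 (u + r) (v + s + u * r) (u * s + v * r) (v * s)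
          = u * r * ((v - s) ^+ 2 + (u + r) * (u * s + v * r)).
  by rewrite /hurwitz3; ring.
by do ![done | apply: sqr_ge0 | apply: mulr_ge0 | apply: addr_ge0].
Qed.

Section RealPolynomials.
Variable R : rcfType.

Local Notation toC := (real_complex R).
Local Notation Re := (@complex.Re R).
Local Notation Im := (@complex.Im R).

Lemma root_conj_real_poly (p : {poly R}) (z : R[i]) :
  root (map_poly toC p) z -> root (map_poly toC p) z^*.
Proof.
rewrite -complex_root_conj -map_poly_comp.
by rewrite (eq_map_poly (g := toC)) // => x /=; rewrite oppr0.
Qed.

Lemma nonreal_root_quadratic_dvdp (p : {poly R}) (z : R[i]) :
  Im z != 0 -> root (map_poly toC p) z ->
  quadratic (- (Re z *+ 2)) (Re z ^+ 2 + Im z ^+ 2) %| p.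
Proof.
move=> z_nonreal z_root.
have z_neq_conj : z != z^*.
  apply: contraNneq z_nonreal => /(congr1 Im) /=; case: z {z_root} => x y /= y_eq.
  apply/eqP; lra.
rewrite -(dvdp_map toC) map_quadratic.
have -> : quadratic (toC (- (Re z *+ 2))) (toC (Re z ^+ 2 + Im z ^+ 2))
          = ('X - z%:P) * ('X - z^*%:P).
  rewrite mul_XsubC_quadratic; congr quadratic; case: z {z_root z_neq_conj z_nonreal} => x y;
  by apply/eqP; rewrite eq_complex /=; apply/andP; split; apply/eqP; ring.
have roots_z : all (root (map_poly toC p)) [:: z; z^*].
  by rewrite /= z_root root_conj_real_poly.
have uniq_z : poly.uniq_roots [:: z; z^*] by rewrite uniq_rootsE /= inE z_neq_conj.
have [q ->] := uniq_roots_prod_XsubC roots_z uniq_z.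
by rewrite big_cons big_seq1 dvdp_mull.
Qed.

Lemma real_root_or_quadratic_dvdp (p : {poly R}) : size p != 1 ->
  (exists x, root p x) \/ (exists u v, quadratic u v %| p).
Proof.
move=> p_nonconst; have /closed_rootP [z z_root] : size (map_poly toC p) != 1.
  by rewrite size_map_poly.
have [z_real|z_nonreal] := eqVneq (Im z) 0; last first.
  right; exists (- (Re z *+ 2)), (Re z ^+ 2 + Im z ^+ 2).
  exact: nonreal_root_quadratic_dvdp.
left; exists (Re z); rewrite -(fmorph_root toC).
by case: z z_root z_real => x y /= z_root y0; rewrite y0 in z_root.
Qed.

Lemma quadratic_dvdp (p : {poly R}) : (2 < size p)%N -> exists u v, quadratic u v %| p.
Proof.
move=> p_size; have p_nonconst : size p != 1 by rewrite gtn_eqF // ltnW.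
case: (real_root_or_quadratic_dvdp p_nonconst) => [[x /factor_theorem [q p_eq]]|//].
have q_size : (1 < size q)%N.
  move: (size_polyMleq q ('X - x%:P)) p_size.
  by rewrite size_XsubC addn2 -p_eq /= => le_p lt_p; rewrite -ltnS (leq_trans lt_p le_p).
have q_nonconst : size q != 1 by rewrite gtn_eqF.
rewrite p_eq; case: (real_root_or_quadratic_dvdp q_nonconst).
  move=> [y /factor_theorem [r ->]]; exists (- (y + x)), (y * x).
  by rewrite -mul_XsubC_quadratic -mulrA dvdp_mull.
by move=> [u [v uv_dvd]]; exists u, v; rewrite dvdp_mulr.
Qed.

Lemma quartic_quadratic_factor (a1 a2 a3 a4 : R) :
  exists u v r s, quartic a1 a2 a3 a4 = quadratic u v * quadratic r s.
Proof.
have [r [s rs_dvd]] : exists r s, quadratic r s %| quartic a1 a2 a3 a4.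
  by apply: quadratic_dvdp; rewrite size_quartic.
set q := quartic a1 a2 a3 a4 %/ quadratic r s.
have q_eq : quartic a1 a2 a3 a4 = q * quadratic r s by rewrite divpK.
have q_monic : q \is monic.
  by rewrite -(monicMr _ (monic_quadratic r s)) -q_eq monic_quartic.
have q_size : size q = 3.
  move: (size_quartic a1 a2 a3 a4).
  by rewrite q_eq size_mul ?monic_neq0 ?monic_quadratic // size_quadratic addn3 => -[].
by exists q`_1, q`_0, r, s; rewrite -monic_size3_quadratic.
Qed.

Lemma quadratic_root_Re_gt0 (r s : R) : (r < 0) || (s < 0) ->
  exists2 w, root (quadratic r%:C s%:C) w & 0 < Re w.
Proof.
move=> /orP rs_neg.
have [disc_ge0|disc_lt0] := lerP 0 (r ^+ 2 - 4 * s).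
  have t_sq := sqr_sqrtr disc_ge0; have t_ge0 := sqrtr_ge0 (r ^+ 2 - 4 * s).
  set t := Num.sqrt _ in t_sq t_ge0.
  exists ((- r + t) / 2)%:C; rewrite /=; last first.
    by case: rs_neg => [r_neg|s_neg]; nra.
  rewrite -map_quadratic fmorph_root /root horner_quadratic.
  by apply/eqP; rewrite expr2 in t_sq; nra.
have r_neg : r < 0 by case: rs_neg => //; nra.
have t_sq : Num.sqrt (4 * s - r ^+ 2) ^+ 2 = 4 * s - r ^+ 2 by rewrite sqr_sqrtr; lra.
set t := Num.sqrt _ in t_sq.
exists ((- r / 2) +i* (t / 2)); last by rewrite /=; lra.
rewrite /root horner_quadratic; simpc; rewrite eq_complex /=.
by apply/andP; split; apply/eqP; rewrite expr2 in t_sq; nra.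
Qed.

Lemma quartic_root_Re_gt0 (a1 a2 a3 a4 : R) : hurwitz3 a1 a2 a3 a4 < 0 ->
  exists z, root (quartic a1%:C a2%:C a3%:C a4%:C) z /\ 0 < Re z.
Proof.
move=> hurwitz_neg; have [u [v [r [s a_eq]]]] := quartic_quadratic_factor a1 a2 a3 a4.
have aC_eq : quartic a1%:C a2%:C a3%:C a4%:C = quadratic u%:C v%:C * quadratic r%:C s%:C.
  by rewrite -map_quartic a_eq rmorphM /= !map_quadratic.
have [uv_neg|] := boolP ((u < 0) || (v < 0)).
  have [w w_root w_Re] := quadratic_root_Re_gt0 uv_neg.
  by exists w; rewrite aC_eq rootM w_root.
rewrite negb_or -!leNgt => /andP[u_ge0 v_ge0].
have [rs_neg|] := boolP ((r < 0) || (s < 0)).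
  have [w w_root w_Re] := quadratic_root_Re_gt0 rs_neg.
  by exists w; rewrite aC_eq rootM w_root orbT.
rewrite negb_or -!leNgt => /andP[r_ge0 s_ge0].
rewrite quadraticM in a_eq; move: hurwitz_neg; have [-> -> -> ->] := quartic_inj a_eq.
by rewrite ltNge hurwitz3_quadraticM_ge0.
Qed.

Lemma poly_lt0_near (p : {poly R}) (x : R) : p.[x] < 0 ->
  exists2 d, 0 < d & forall y, `|y - x| < d -> p.[y] < 0.
Proof.
move=> px_neg; have px_opp_gt0 : 0 < - p.[x] by rewrite oppr_gt0.
have [d d_gt0 p_near] := poly_cont x p px_opp_gt0.
by exists d => // y /p_near /ltr_normlW; lra.
Qed.

End RealPolynomials.

Lemma p_eta_hurwitz3_lt0 (R : rcfType) (alpha beta gamma kappa lambda : R) :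
  0 < alpha -> 0 < beta -> 0 < gamma -> 0 < kappa ->
  0 < gamma - alpha * beta -> 0 < lambda ->
  exists2 delta : R, 0 < delta & forall eta : R, `|eta| < delta ->
    hurwitz3 (alpha + kappa * lambda)
      (beta * lambda + alpha * kappa * lambda + eta ^+ 2 * lambda ^+ 2)
      (gamma * lambda + beta * kappa * lambda ^+ 2 + alpha * eta ^+ 2 * lambda ^+ 2)
      (gamma * kappa * lambda ^+ 2) < 0.
Proof.
move=> alpha_gt0 beta_gt0 gamma_gt0 kappa_gt0 mu_gt0 lambda_gt0.
pose H : {poly R} := hurwitz3 (alpha + kappa * lambda)%:P
  ((beta * lambda + alpha * kappa * lambda)%:P + (lambda ^+ 2)%:P * 'X^2)
  ((gamma * lambda + beta * kappa * lambda ^+ 2)%:P + (alpha * lambda ^+ 2)%:P * 'X^2)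
  (gamma * kappa * lambda ^+ 2)%:P.
have H_eval eta : H.[eta] = hurwitz3 (alpha + kappa * lambda)
      (beta * lambda + alpha * kappa * lambda + eta ^+ 2 * lambda ^+ 2)
      (gamma * lambda + beta * kappa * lambda ^+ 2 + alpha * eta ^+ 2 * lambda ^+ 2)
      (gamma * kappa * lambda ^+ 2).
  by rewrite /H /hurwitz3 !(hornerD, hornerN, hornerM, horner_exp, hornerC, hornerX); ring.
have H0_neg : H.[0] < 0.
  have -> : H.[0] = - (lambda * (gamma - alpha * beta)) *
      ((kappa * lambda) ^+ 3 + alpha * (kappa * lambda) ^+ 2
       + beta * lambda * (kappa * lambda) + gamma * lambda).
    by rewrite H_eval /hurwitz3; ring.
  by rewrite mulNr oppr_lt0; do ![done | apply: mulr_gt0 | apply: addr_gt0 | apply: exprn_gt0].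
have [delta delta_gt0 H_near] := poly_lt0_near H0_neg.
by exists delta => // eta eta_small; rewrite -H_eval H_near ?subr0.
Qed.

Theorem proposition5p1 (R : realType) (alpha beta gamma kappa lambda : R) :
  0 < alpha -> 0 < beta -> 0 < gamma -> 0 < kappa ->
  0 < gamma - alpha * beta -> 0 < lambda ->
  exists delta : R, 0 < delta /\
    forall eta : R, `|eta| < delta ->
      exists z : R[i], root (p_eta alpha beta gamma kappa lambda eta) z
                       /\ 0 < complex.Re z.
Proof.
move=> alpha_gt0 beta_gt0 gamma_gt0 kappa_gt0 mu_gt0 lambda_gt0.
have [delta delta_gt0 hurwitz_neg] :=
  p_eta_hurwitz3_lt0 alpha_gt0 beta_gt0 gamma_gt0 kappa_gt0 mu_gt0 lambda_gt0.
exists delta; split => // eta /hurwitz_neg; exact: quartic_root_Re_gt0.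
Qed.
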